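(* Let $T$ be a prae-dilator. Then for every Bachmann-Howard fixed point $Y$ of $T$ there is an order embedding of $\operatorname{BH}(T)$ into $Y$.
   Context: The finite subset functor $[\cdot]^{<\omega}$ sends a set $X$ to the set of its finite subsets and a function $f$ to $[f]^{<\omega}(a)=\{f(x)\mid x\in a\}$; subsets of linear orders are regarded as suborders. A prae-dilator consists of an endofunctor $X\mapsto T_X$ on the category of linear orders (morphisms: order embeddings) and a natural transformation $\operatorname{supp}^T:T\Rightarrow[\cdot]^{<\omega}$ such that for every linear order $X$ and every $\sigma\in T_X$ we have $\sigma\in\operatorname{rng}(T_{\iota_\sigma})$, where $\iota_\sigma:\operatorname{supp}^T_X(\sigma)\hookrightarrow X$ is the inclusion. For a linear order $Z$ and finite $a,b\subseteq Z$ write $a<^{\operatorname{fin}}_Z b$ iff for every $s\in a$ there is $t\in b$ with $s<_Z t$; $\leq^{\operatorname{fin}}_Z$ is defined analogously with $\leq_Z$; singletons $\{s\}$ are written $s$. A function $\vartheta:T_Y\to Y$ ($Y$ a linear order) is a Bachmann-Howard collapse if for all $\sigma,\tau\in T_Y$: (1) if $\sigma<_{T_Y}\tau$ and $\operatorname{supp}^T_Y(\sigma)<^{\operatorname{fin}}_Y\vartheta(\tau)$ then $\vartheta(\sigma)<_Y\vartheta(\tau)$; (2) $\operatorname{supp}^T_Y(\sigma)<^{\operatorname{fin}}_Y\vartheta(\sigma)$. If such a function exists, $Y$ is a Bachmann-Howard fixed point of $T$. Construction of $\operatorname{BH}(T)$: for a linear order $X$ let $\vartheta_T(X)$ be the set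 of formal terms $\vartheta\sigma$ with $\sigma\in T_X$. A Bachmann-Howard system is a triple $(X,\iota_X,L_X)$ with $X$ a linear order, $\iota_X:X\to\vartheta_T(X)$ and $L_X:X\to\omega$ functions, such that $L_{\vartheta_T(X)}\circ\iota_X=L_X$, where $L_{\vartheta_T(X)}(\vartheta\sigma):=\max\{L_X(x)\mid x\in\operatorname{supp}^T_X(\sigma)\}+1$ (maximum of the empty set is $0$). For such a system define the linear order $\vartheta\sigma<_{\vartheta_T(X)}\vartheta\tau$ by recursion on $L_{\vartheta_T(X)}(\vartheta\sigma)+L_{\vartheta_T(X)}(\vartheta\tau)$ to hold iff either (a) $\sigma<_{T_X}\tau$ and $[\iota_X]^{<\omega}(\operatorname{supp}^T_X(\sigma))<^{\operatorname{fin}}_{\vartheta_T(X)}\vartheta\tau$, or (b) $\tau<_{T_X}\sigma$ and $\vartheta\sigma\leq^{\operatorname{fin}}_{\vartheta_T(X)}[\iota_X]^{<\omega}(\operatorname{supp}^T_X(\tau))$. The system is good if $\iota_X$ is an order embedding; then define $\iota_{\vartheta_T(X)}(\vartheta\sigma)=\vartheta\,T_{\iota_X}(\sigma)$, and $(\vartheta_T(X),\iota_{\vartheta_T(X)},L_{\vartheta_T(X)})$ is again a good Bachmann-Howard system. Let $(X_0,\iota_{X_0},L_{X_0})=(\emptyset,\emptyset,\emptyset)$ and $(X_{n+1},\iota_{X_{n+1}},L_{X_{n+1}})=(\vartheta_T(X_n),\iota_{\vartheta_T(X_n)},L_{\vartheta_T(X_n)})$. Then $\operatorname{BH}(T)$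 is the direct limit of the linear orders $X_n$ along the order embeddings $\iota_{X_n}:X_n\to X_{n+1}$. *)

From Stdlib Require Import List PeanoNat ClassicalEpsilon ProofIrrelevance.
Import ListNotations.



Record IsLin (A : Type) (R : A -> A -> Prop) : Prop := {
  lin_irrefl : forall x, ~ R x x;
  lin_trans : forall x y z, R x y -> R y z -> R x z;
  lin_total : forall x y, R x y \/ x = y \/ R y x }.

Record LinOrd := {
  carrier :> Type;
  lt : carrier -> carrier -> Prop;
  lt_lin : IsLin carrier lt }.

Arguments lt {l} _ _.

(* For linear orders, an order embedding is a strictly increasing map. *)
Record Emb (X Y : LinOrd) := {
  emb_fun :> X -> Y;
  emb_mono : forall x y, lt x y -> lt (emb_fun x) (emb_fun y) }.
Arguments emb_fun {X Y} _ _.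
Arguments emb_mono {X Y} _ _ _ _.

Definition id_emb (X : LinOrd) : Emb X X :=
  {| emb_fun := fun x => x; emb_mono := fun x y h => h |}.

Definition comp_emb {X Y Z : LinOrd} (g : Emb Y Z) (f : Emb X Y) : Emb X Z :=
  {| emb_fun := fun x => g (f x);
     emb_mono := fun x y h => emb_mono g _ _ (emb_mono f _ _ h) |}.

(** Finite subsets are represented by lists (only membership matters);
    a finite subset of a linear order is regarded as a suborder. *)

Definition sub_lt (X : LinOrd) (a : list X) (x y : {x : X | In x a}) : Prop :=
  lt (proj1_sig x) (proj1_sig y).

Lemma sub_lt_lin (X : LinOrd) (a : list X) : IsLin _ (sub_lt X a).
Proof.
  destruct (lt_lin X) as [irr tr tot]. split; unfold sub_lt.
  - intros [x hx]; apply irr.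
  - intros [x hx] [y hy] [z hz]; apply tr.
  - intros [x hx] [y hy]; simpl. destruct (tot x y) as [h|[h|h]]; auto.
    right; left. subst y. f_equal. apply proof_irrelevance.
Qed.

Definition subOrd (X : LinOrd) (a : list X) : LinOrd :=
  {| carrier := {x : X | In x a}; lt := sub_lt X a; lt_lin := sub_lt_lin X a |}.

Definition incl_emb (X : LinOrd) (a : list X) : Emb (subOrd X a) X :=
  @Build_Emb (subOrd X a) X (fun x : {x : X | In x a} => proj1_sig x)
    (fun x y h => h).

Record PraeDilator := {
  PD_T : LinOrd -> LinOrd;
  PD_map : forall X Y : LinOrd, Emb X Y -> Emb (PD_T X) (PD_T Y);
  PD_map_id : forall (X : LinOrd) (s : PD_T X), PD_map X X (id_emb X) s = s;
  PD_map_comp : forall (X Y Z : LinOrd) (f : Emb X Y) (g : Emb Y Z) (s : PD_T X),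
      PD_map X Z (comp_emb g f) s = PD_map Y Z g (PD_map X Y f s);
  PD_supp : forall X : LinOrd, PD_T X -> list X;
  PD_supp_nat : forall (X Y : LinOrd) (f : Emb X Y) (s : PD_T X) (y : Y),
      In y (PD_supp Y (PD_map X Y f s)) <-> In y (map f (PD_supp X s));
  PD_supp_rng : forall (X : LinOrd) (s : PD_T X),
      exists t : PD_T (subOrd X (PD_supp X s)),
        PD_map (subOrd X (PD_supp X s)) X (incl_emb X (PD_supp X s)) t = s }.

Arguments PD_map p {X Y} _.
Arguments PD_supp p {X} _.

Definition BH_collapse (T : PraeDilator) (Y : LinOrd) (th : PD_T T Y -> Y) : Prop :=
  forall s t : PD_T T Y,
    (lt s t -> (forall a, In a (PD_supp T s) -> lt a (th t)) -> lt (th s) (th t)) /\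
    (forall a, In a (PD_supp T s) -> lt a (th s)).

Definition BH_fixed_point (T : PraeDilator) (Y : LinOrd) : Prop :=
  exists th : PD_T T Y -> Y, BH_collapse T Y th.

Section BHConstruction.
Variable T : PraeDilator.

(* A (candidate) Bachmann-Howard system (X, iota_X, L_X); the formal term
   "theta sigma" in theta_T(X) is represented by sigma : T_X itself. *)
Record Sys := {
  S_X : LinOrd;
  S_i : S_X -> PD_T T S_X;
  S_L : S_X -> nat }.

Definition thetaL (G : Sys) (s : PD_T T (S_X G)) : nat :=
  S (fold_right Nat.max 0 (map (S_L G) (PD_supp T s))).

(* The order on theta_T(X), by recursion with fuel k; the intended fuel is
   (any bound >) L(theta sigma) + L(theta tau). *)
Fixpoint theta_R (G : Sys) (k : nat) (s t : PD_T T (S_X G)) : Prop :=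
  match k with
  | 0 => False
  | S k =>
      (lt s t /\ forall a, In a (PD_supp T s) -> theta_R G k (S_i G a) t) \/
      (lt t s /\ exists b, In b (PD_supp T t) /\ (s = S_i G b \/ theta_R G k s (S_i G b)))
  end.

Definition theta_lt (G : Sys) (s t : PD_T T (S_X G)) : Prop :=
  theta_R G (S (thetaL G s + thetaL G t)) s t.

(* (X, iota_X, L_X) is a Bachmann-Howard system, theta_T(X) is linearly ordered
   and the system is good (iota_X an order embedding). *)
Definition good (G : Sys) : Prop :=
  (forall x, thetaL G (S_i G x) = S_L G x) /\
  IsLin _ (theta_lt G) /\
  (forall x y, lt x y -> theta_lt G (S_i G x) (S_i G y)).

Definition thetaOrd (G : Sys) (H : good G) : LinOrd :=
  {| carrier := PD_T T (S_X G); lt := theta_lt G; lt_lin := proj1 (proj2 H) |}.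

Definition iota_emb (G : Sys) (H : good G) : Emb (S_X G) (thetaOrd G H) :=
  @Build_Emb (S_X G) (thetaOrd G H) (S_i G) (proj2 (proj2 H)).

Definition nextSys (G : Sys) (H : good G) : Sys :=
  {| S_X := thetaOrd G H;
     S_i := fun s => PD_map T (iota_emb G H) s;
     S_L := thetaL G |}.

(* One step, together with the connecting map iota_X : X -> theta_T(X).
   The "bad" branch never occurs (every X_n is good), it only makes the
   definition total. *)
Definition stepj (G : Sys) : {G' : Sys & S_X G -> S_X G'} :=
  match excluded_middle_informative (good G) with
  | left H => existT _ (nextSys G H) (S_i G)
  | right _ => existT _ G (fun x => x)
  end.

Lemma empty_lin : IsLin Empty_set (fun _ _ => False).
Proof. split; intros x; destruct x. Qed.

Definition emptyLin : LinOrd :=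
  {| carrier := Empty_set; lt := fun _ _ => False; lt_lin := empty_lin |}.

Definition Sys0 : Sys :=
  {| S_X := emptyLin;
     S_i := fun x : Empty_set => match x with end;
     S_L := fun x : Empty_set => match x with end |}.

Fixpoint Xn (n : nat) : Sys :=
  match n with
  | 0 => Sys0
  | S n => projT1 (stepj (Xn n))
  end.

Definition jmap (n : nat) : S_X (Xn n) -> S_X (Xn (S n)) := projT2 (stepj (Xn n)).

Fixpoint liftd (m d : nat) : S_X (Xn m) -> S_X (Xn (d + m)) :=
  match d with
  | 0 => fun x => x
  | S d => fun x => jmap (d + m) (liftd m d x)
  end.

(* The direct limit BH(T): elements are pairs (n, x) with x in X_n, two pairs
   being identified / compared after mapping both to a common level. *)
Definition BHel : Type := {n : nat & S_X (Xn n)}.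

Definition castX (m n : nat) (e : m = n) (x : S_X (Xn m)) : S_X (Xn n) :=
  eq_rect m (fun k => S_X (Xn k)) x n e.

Definition BH_eq (p q : BHel) : Prop :=
  liftd (projT1 p) (projT1 q) (projT2 p) =
  castX _ _ (Nat.add_comm (projT1 p) (projT1 q)) (liftd (projT1 q) (projT1 p) (projT2 q)).

Definition BH_lt (p q : BHel) : Prop :=
  lt (liftd (projT1 p) (projT1 q) (projT2 p))
     (castX _ _ (Nat.add_comm (projT1 p) (projT1 q)) (liftd (projT1 q) (projT1 p) (projT2 q))).

End BHConstruction.

(** Given a Bachmann-Howard collapse [th : T_Y -> Y], embeddings
    [f_n : X_n -> Y] are built by recursion, [f_(n+1) (theta s) := th (T_(f_n) s)],
    maintaining the invariant [th (T_(f_n) (iota x)) = f_n x], i.e. that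
    [f_(n+1)] extends [f_n] along [iota : X_n -> X_(n+1)].  That [f_(n+1)] is
    strictly increasing follows by induction along the recursive definition of
    the order on [theta_T(X_n)]: clause (a) of that order is matched by the
    first condition on a collapse, clause (b) by the second.  Being compatible
    with the connecting maps, the [f_n] induce an embedding of the direct limit. *)

From Stdlib Require Import List FunctionalExtensionality ProofIrrelevance ClassicalEpsilon.

Lemma emb_eq_iff (X Z : LinOrd) (g : Emb X Z) (x y : X) : x = y <-> g x = g y.
Proof.
  split; [now intros ->|intros E].
  destruct (lt_lin Z) as [irrZ _ _], (lt_lin X) as [_ _ totX].
  destruct (totX x y) as [h|[h|h]]; [|exact h|];
    apply (emb_mono g) in h; rewrite E in h; contradiction (irrZ _ h).
Qed.

Lemma emb_lt_iff (X Z : LinOrd) (g : Emb X Z) (x y : X) : lt x y <-> lt (g x) (g y).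
Proof.
  split; [apply emb_mono|intros h].
  destruct (lt_lin Z) as [irrZ trZ _], (lt_lin X) as [_ _ totX].
  destruct (totX x y) as [h'|[->|h']]; [exact h'| |].
  - contradiction (irrZ _ h).
  - apply (emb_mono g) in h'. contradiction (irrZ _ (trZ _ _ _ h h')).
Qed.

Lemma PD_map_ext (T : PraeDilator) (X Z : LinOrd) (f g : Emb X Z) :
  (forall x, f x = g x) -> forall s, PD_map T f s = PD_map T g s.
Proof.
  intros Hfg s. enough (E : f = g) by now subst g.
  destruct f as [f1 m1], g as [g1 m2]; simpl in Hfg.
  assert (E : f1 = g1) by (apply functional_extensionality; exact Hfg).
  subst g1. f_equal. apply proof_irrelevance.
Qed.

Section EmbeddingIntoFixedPoint.

Variables (T : PraeDilator) (Y : LinOrd) (th : PD_T T Y -> Y).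
Hypothesis th_collapse : BH_collapse T Y th.

Definition collapse_compatible (G : Sys T) (f : Emb (S_X T G) Y) : Prop :=
  forall x, th (PD_map T f (S_i T G x)) = f x.

Definition compatible_emb (G : Sys T) : Type :=
  {f : Emb (S_X T G) Y | collapse_compatible G f}.

Lemma theta_R_collapse_lt (G : Sys T) (f : Emb (S_X T G) Y) :
  collapse_compatible G f ->
  forall k s t, theta_R T G k s t -> lt (th (PD_map T f s)) (th (PD_map T f t)).
Proof.
  intros f_compat. destruct (lt_lin Y) as [_ trY _].
  induction k as [|k IH]; intros s t h; [contradiction|].
  destruct h as [[st supp_s]|[ts [b [b_supp b_case]]]].
  - apply (proj1 (th_collapse _ _)); [now apply emb_mono|].
    intros a' ha'. apply PD_supp_nat, in_map_iff in ha'.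
    destruct ha' as [a [<- a_supp]].
    rewrite <- (f_compat a). now apply IH, supp_s.
  - assert (fb_lt : lt (f b) (th (PD_map T f t))).
    { apply (proj2 (th_collapse _ (PD_map T f t))), PD_supp_nat, in_map, b_supp. }
    destruct b_case as [->|b_case].
    + now rewrite f_compat.
    + apply trY with (f b); [|exact fb_lt].
      rewrite <- (f_compat b). now apply IH.
Qed.

Definition collapse_emb (G : Sys T) (H : good T G) (f : compatible_emb G) :
  Emb (thetaOrd T G H) Y :=
  @Build_Emb (thetaOrd T G H) Y (fun s => th (PD_map T (proj1_sig f) s))
    (fun s t => theta_R_collapse_lt G (proj1_sig f) (proj2_sig f) _ s t).

Lemma collapse_emb_compatible (G : Sys T) (H : good T G) (f : compatible_emb G) :
  collapse_compatible (nextSys T G H) (collapse_emb G H f).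
Proof.
  intros s. simpl. rewrite <- PD_map_comp. f_equal.
  apply PD_map_ext. intros x. apply (proj2_sig f).
Qed.

Definition step_emb (G : Sys T) (f : compatible_emb G) :
  compatible_emb (projT1 (stepj T G)).
Proof.
  unfold stepj. destruct (excluded_middle_informative (good T G)) as [H|H].
  - exact (exist _ (collapse_emb G H f) (collapse_emb_compatible G H f)).
  - exact f.
Defined.

Lemma step_emb_extends (G : Sys T) (f : compatible_emb G) (x : S_X T G) :
  proj1_sig (step_emb G f) (projT2 (stepj T G) x) = proj1_sig f x.
Proof.
  unfold step_emb, stepj. destruct (excluded_middle_informative (good T G)); simpl.
  - apply (proj2_sig f).
  - reflexivity.
Qed.

Definition emb_Sys0 : compatible_emb (Sys0 T).
Proof.
  unshelve eexists; [unshelve econstructor|]; intros [].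
Defined.

Fixpoint level_emb (n : nat) : compatible_emb (Xn T n) :=
  match n with
  | 0 => emb_Sys0
  | S n => step_emb (Xn T n) (level_emb n)
  end.

Definition bh_emb (p : BHel T) : Y := proj1_sig (level_emb (projT1 p)) (projT2 p).

Lemma level_emb_liftd (m d : nat) (x : S_X T (Xn T m)) :
  proj1_sig (level_emb (d + m)) (liftd T m d x) = proj1_sig (level_emb m) x.
Proof.
  induction d as [|d IH]; [reflexivity|].
  simpl. unfold jmap. now rewrite step_emb_extends.
Qed.

Lemma level_emb_castX (m n : nat) (e : m = n) (x : S_X T (Xn T m)) :
  proj1_sig (level_emb n) (castX T m n e x) = proj1_sig (level_emb m) x.
Proof. now destruct e. Qed.

Lemma bh_emb_common_level (p q : BHel T) :
  proj1_sig (level_emb (projT1 q + projT1 p)) (liftd T (projT1 p) (projT1 q) (projT2 p))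
    = bh_emb p /\
  proj1_sig (level_emb (projT1 q + projT1 p))
    (castX T _ _ (PeanoNat.Nat.add_comm (projT1 p) (projT1 q))
       (liftd T (projT1 q) (projT1 p) (projT2 q)))
    = bh_emb q.
Proof.
  split; [apply level_emb_liftd|]. rewrite level_emb_castX. apply level_emb_liftd.
Qed.

End EmbeddingIntoFixedPoint.

Theorem theorem4p4 (T : PraeDilator) (Y : LinOrd) (HY : BH_fixed_point T Y) :
  exists f : BHel T -> Y,
    (forall p q, BH_eq T p q <-> f p = f q) /\
    (forall p q, BH_lt T p q <-> lt (f p) (f q)).
Proof.
  destruct HY as [th th_collapse].
  exists (bh_emb T Y th th_collapse).
  split; intros p q; destruct (bh_emb_common_level T Y th th_collapse p q) as [<- <-].
  - apply emb_eq_iff.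
  - apply emb_lt_iff.
Qed.
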